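(* Let $W$ be a symmetric binary-input discrete memoryless channel with finite output alphabet $\mathcal{Y}$, let $N=2^n$, let $0\le i\le N-1$, and let $A=A(N,i)$ be the binary matrix formed by rows $i+1,\dots,N$ of $G_N=F^{\otimes n}$, where $F=\begin{pmatrix}1&0\\1&1\end{pmatrix}$ over $\mathbb{F}_2$. Let $P$ be an $N\times N$ permutation matrix and suppose there exists an invertible $(N-i)\times(N-i)$ matrix $H$ over $\mathbb{F}_2$ with $AP=HA$. Then for every $\mathbf{y}\in\mathcal{Y}^N$, the vectors $\mathbf{y}$ and $T_P(\mathbf{y})$ are probability equivalent on $A$, i.e. $W_A(T_P(\mathbf{y}))=W_A(\mathbf{y})$.
   Context: Symmetric channel: $W(y|x)$, $x\in\{0,1\}$, $y\in\mathcal{Y}$, and there is an involution $y\mapsto 1\cdot y$ of $\mathcal{Y}$ with $W(1\cdot y|0)=W(y|1)$ and $W(1\cdot y|1)=W(y|0)$; set $0\cdot y=y$. For $\mathbf{u}\in\mathbb{F}_2^N$ and $\mathbf{y}\in\mathcal{Y}^N$, $\mathbf{u}\cdot\mathbf{y}=(u_1\cdot y_1,\dots,u_N\cdot y_N)$. $W^N(\mathbf{y}|\mathbf{x})=\prod_{j=1}^N W(y_j|x_j)$. For a binary matrix $A$ with $N$ columns, with row space $\mathrm{row}(A)\subseteq\mathbb{F}_2^N$, define $W_A(\mathbf{y})=\frac{1}{2^{N-1}}\sum_{\mathbf{u}\in\mathrm{row}(A)}W^N(\mathbf{u}\cdot\mathbf{y}|\mathbf{0})$; two vectors $\mathbf{y},\mathbf{v}$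 are probability equivalent on $A$ if $W_A(\mathbf{y})=W_A(\mathbf{v})$. $T_P(\mathbf{y})$ denotes the vector obtained by permuting the coordinates of $\mathbf{y}$ according to $P$ (i.e. $\mathbf{y}P$). *)

From HB Require Import structures.
From mathcomp Require Import all_boot all_order all_algebra all_fingroup.
From mathcomp Require Import mxtens.
Set Implicit Arguments. Unset Strict Implicit. Unset Printing Implicit Defensive.
Import Order.TTheory GRing.Theory Num.Theory.
Local Open Scope ring_scope.

Definition Fker : 'M['F_2]_2 := \matrix_(r < 2, c < 2) (if (c <= r)%N then 1 else 0).

Definition GN (n : nat) : 'M['F_2]_(2 ^ n) := ntensmx Fker n.

Lemma shift_ord_proof (N : nat) (i : 'I_N) (r : 'I_(N - i)) : (i + r < N)%N.
Proof. by have := ltn_ord r; rewrite ltn_subRL. Qed.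

Definition shift_ord (N : nat) (i : 'I_N) (r : 'I_(N - i)) : 'I_N :=
  Ordinal (shift_ord_proof r).

(* A(N,i): rows i+1,...,N (1-based) of G_N, i.e. rows i,...,N-1 (0-based). *)
Definition Amat (n : nat) (i : 'I_(2 ^ n)) : 'M['F_2]_(2 ^ n - i, 2 ^ n) :=
  rowsub (@shift_ord (2 ^ n) i) (GN n).

Definition act (Y : Type) (flip : Y -> Y) (u : 'F_2) (y : Y) : Y :=
  if u == 1 then flip y else y.

Definition actv (Y : Type) (flip : Y -> Y) (N : nat) (u : 'rV['F_2]_N)
  (y : 'rV[Y]_N) : 'rV[Y]_N := \row_j act flip (u 0 j) (y 0 j).

Definition WN (R : realFieldType) (Y : Type) (W : 'F_2 -> Y -> R) (N : nat)
  (y : 'rV[Y]_N) (x : 'rV['F_2]_N) : R := \prod_(j < N) W (x 0 j) (y 0 j).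

Definition WA (R : realFieldType) (Y : finType) (W : 'F_2 -> Y -> R)
  (flip : Y -> Y) (m N : nat) (A : 'M['F_2]_(m, N)) (y : 'rV[Y]_N) : R :=
  (2 ^+ N.-1)^-1 * \sum_(u : 'rV['F_2]_N | (u <= A)%MS) WN W (actv flip u y) 0.

(* T_P(y) = y P for P = perm_mx s, i.e. (yP)_j = y_{s^{-1}(j)} *)
Definition TP (Y : Type) (N : nat) (s : 'S_N) (y : 'rV[Y]_N) : 'rV[Y]_N :=
  \row_j y 0 (s^-1 j)%g.

Definition is_channel (R : realFieldType) (Y : finType) (W : 'F_2 -> Y -> R) :=
  (forall x y, 0 <= W x y) /\ (forall x, \sum_(y : Y) W x y = 1).

Definition symmetric_channel (R : realFieldType) (Y : finType)
  (W : 'F_2 -> Y -> R) (flip : Y -> Y) :=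
  involutive flip /\ (forall y, W 0 (flip y) = W 1 y) /\ (forall y, W 1 (flip y) = W 0 y).

(* If [A P = H A] with [H] invertible, then [u |-> u P] permutes the row space of [A].
   Reindexing the sum defining [W_A] along this bijection and using
   [(u P) . (y P) = (u . y) P] reduces the claim to the invariance of the memoryless
   likelihood [W^N(. | 0)] under a permutation of the coordinates. *)

From HB Require Import structures.
From mathcomp Require Import all_boot all_order all_algebra all_fingroup.
From mathcomp Require Import mxtens.
Set Implicit Arguments. Unset Strict Implicit. Unset Printing Implicit Defensive.
Import Order.TTheory GRing.Theory Num.Theory.
Local Open Scope ring_scope.

Lemma mulmx_perm_mx_entry (R : pzSemiRingType) (N : nat) (s : 'S_N)
    (v : 'rV[R]_N) (j : 'I_N) :
  (v *m perm_mx s) 0 j = v 0 (s^-1 j)%g.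
Proof. by rewrite -[s]invgK -col_permE invgK mxE. Qed.

Lemma submx_mulmx_perm (F : fieldType) (m N : nat) (A : 'M[F]_(m, N))
    (H : 'M[F]_m) (s : 'S_N) :
    H \in unitmx -> A *m perm_mx s = H *m A ->
  forall v : 'rV[F]_N, (v *m perm_mx s <= A)%MS = (v <= A)%MS.
Proof.
move=> unitH HAP v; have fullH : row_full H by rewrite row_full_unit.
by rewrite -(eqmxMfull A fullH) -HAP submxMfree // row_free_unit unitmx_perm.
Qed.

Lemma sum_submx_mulmx_perm (F : finFieldType) (V : nmodType) (m N : nat)
    (A : 'M[F]_(m, N)) (s : 'S_N) (f : 'rV[F]_N -> V) :
    (forall v : 'rV[F]_N, (v *m perm_mx s <= A)%MS = (v <= A)%MS) ->
  \sum_(u | (u <= A)%MS) f (u *m perm_mx s) = \sum_(u | (u <= A)%MS) f u.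
Proof.
move=> stableA; rewrite [RHS](reindex_inj (can_inj (mulmxK (unitmx_perm _ s)))).
by apply: eq_bigl => u; rewrite stableA.
Qed.

Lemma actv_mulmx_perm (Y : Type) (flip : Y -> Y) (N : nat) (s : 'S_N)
    (v : 'rV['F_2]_N) (y : 'rV[Y]_N) :
  actv flip (v *m perm_mx s) (TP s y) = TP s (actv flip v y).
Proof. by apply/rowP => j; rewrite mxE mulmx_perm_mx_entry !mxE. Qed.

Lemma WN_TP (R : realFieldType) (Y : Type) (W : 'F_2 -> Y -> R) (N : nat)
    (s : 'S_N) (y : 'rV[Y]_N) (x : 'rV['F_2]_N) :
  WN W (TP s y) (TP s x) = WN W y x.
Proof.
rewrite /WN (reindex_inj (@perm_inj _ s)) /=.
by apply: eq_bigr => j _; rewrite !mxE permK.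
Qed.

Lemma TP0 (V : nmodType) (N : nat) (s : 'S_N) : TP s (0 : 'rV[V]_N) = 0.
Proof. by apply/rowP => j; rewrite !mxE. Qed.

Theorem theorem1 (R : realFieldType) (Y : finType) (W : 'F_2 -> Y -> R)
  (flip : Y -> Y) (n : nat) (i : 'I_(2 ^ n)) (s : 'S_(2 ^ n))
  (Hch : is_channel W) (Hsym : symmetric_channel W flip)
  (H : 'M['F_2]_(2 ^ n - i)) (HH : H \in unitmx)
  (HAP : Amat i *m perm_mx s = H *m Amat i) :
  forall y : 'rV[Y]_(2 ^ n), WA W flip (Amat i) (TP s y) = WA W flip (Amat i) y.
Proof.
move=> y; rewrite /WA; congr (_ * _).
rewrite -(sum_submx_mulmx_perm (fun u => WN W (actv flip u (TP s y)) 0)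
            (submx_mulmx_perm HH HAP)).
by apply: eq_bigr => u _; rewrite actv_mulmx_perm -[X in WN _ _ X](TP0 _ s) WN_TP.
Qed.
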